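(* Let $\theta_1,\theta_2>0$ and consider on $[0,1]^3$ the system $\dot x = x(1-x)(0.5ry-0.5y+0.5)$, $\dot y = y(1-y)(0.5rx-0.5x-0.5r)$, $\dot r = r(1-r)[(1+\theta_1)x+(1+\theta_2)y-2]$. For every initial condition $(x_0,y_0,r_0)\in(0,1)^3$, the solution satisfies $x(t)\to1$ and $y(t)\to0$ as $t\to\infty$; moreover $r(t)\to1$ if $\theta_1>1$, $r(t)\to0$ if $\theta_1<1$, and if $\theta_1=1$ the solution converges to a point of the segment $\{(1,0,r):r\in[0,1]\}$.
   Context: This is the two-population replicator system with environmental feedback for the payoff matrices $A(r)=\begin{bmatrix}0.5r&1\\0&0.5\end{bmatrix}$ (population 1) and $B(r)=\begin{bmatrix}0.5&0\\1&0.5r\end{bmatrix}$ (population 2); $x,y$ are the fractions of strategy 1 in populations 1 and 2 and $r\in[0,1]$ is the environmental state. *)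

From Stdlib Require Import Reals Lra.
Open Scope R_scope.

Definition fx (x y r : R) : R := x * (1 - x) * (r * y / 2 - y / 2 + 1 / 2).
Definition fy (x y r : R) : R := y * (1 - y) * (r * x / 2 - x / 2 - r / 2).
Definition fr (th1 th2 x y r : R) : R :=
  r * (1 - r) * ((1 + th1) * x + (1 + th2) * y - 2).

Definition conv_infty (f : R -> R) (l : R) : Prop :=
  forall eps : R, 0 < eps -> exists T : R, forall t : R, T <= t -> Rabs (f t - l) < eps.

Definition right_cont0 (f : R -> R) : Prop :=
  forall eps : R, 0 < eps -> exists delta : R, 0 < delta /\
    forall t : R, 0 <= t < delta -> Rabs (f t - f 0) < eps.

Definition is_solution (th1 th2 : R) (x y r : R -> R) (x0 y0 r0 : R) : Prop :=
  x 0 = x0 /\ y 0 = y0 /\ r 0 = r0 /\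
  right_cont0 x /\ right_cont0 y /\ right_cont0 r /\
  (forall t : R, 0 < t ->
     derivable_pt_lim x t (fx (x t) (y t) (r t)) /\
     derivable_pt_lim y t (fy (x t) (y t) (r t)) /\
     derivable_pt_lim r t (fr th1 th2 (x t) (y t) (r t))).

(* Inside the open cube every factor of the vector field is bounded, and each equation has the
   logistic form f' = f (1 - f) h, so Gronwall's inequality keeps f and 1 - f positive: the cube
   is invariant.  There the gain of strategy 1 in population 1 is positive and that of strategy 1
   in population 2 negative, so x increases, y decreases, and from time 1 on both 1 - x and y
   decay at the exponential rate x(1) (1 - y(1)) / 2.  Consequently the environmental feedback
   (1 + θ1) x + (1 + θ2) y - 2 tends to θ1 - 1 exponentially fast.  If θ1 < 1 (resp. θ1 > 1)
   it is eventually negative (resp. positive), and r (resp. 1 - r) decays exponentially; if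
   θ1 = 1, then r' is bounded above by an integrable exponential and r is bounded below, so r
   converges. *)

From Stdlib Require Import Reals Lra Psatz Classical.
From Coquelicot Require Import Coquelicot.
Open Scope R_scope.

Lemma derivable_pt_lim_exp_affine (k a t : R) :
  derivable_pt_lim (fun s => exp (k * (s - a))) t (k * exp (k * (t - a))).
Proof. apply is_derive_Reals. auto_derive; auto. unfold Rminus; ring. Qed.

Lemma deriv_nonneg_le (f f' : R -> R) (a b : R) : a <= b ->
  (forall c, a <= c <= b -> derivable_pt_lim f c (f' c)) ->
  (forall c, a < c < b -> 0 <= f' c) -> f a <= f b.
Proof.
  intros Hab Hd Hpos. destruct (Req_dec a b) as [<-|Hne]; [lra|].
  destruct (MVT_cor2 f f' a b ltac:(lra) Hd) as [c [Hc Hcab]].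
  specialize (Hpos c Hcab). nra.
Qed.

Lemma deriv_nonpos_ge (f f' : R -> R) (a b : R) : a <= b ->
  (forall c, a <= c <= b -> derivable_pt_lim f c (f' c)) ->
  (forall c, a < c < b -> f' c <= 0) -> f b <= f a.
Proof.
  intros Hab Hd Hneg.
  enough (- f a <= - f b) by lra.
  apply (deriv_nonneg_le (fun s => - f s) (fun c => - f' c) a b Hab).
  - intros c Hc. exact (derivable_pt_lim_opp f c (f' c) (Hd c Hc)).
  - intros c Hc. specialize (Hneg c Hc). lra.
Qed.

(* Gronwall: [f s * exp (k (s - a))] is nondecreasing. *)
Lemma gronwall_lower (f f' : R -> R) (k a b : R) : a <= b ->
  (forall c, a <= c <= b -> derivable_pt_lim f c (f' c)) ->
  (forall c, a < c < b -> - k * f c <= f' c) ->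
  f a * exp (- k * (b - a)) <= f b.
Proof.
  intros Hab Hd Hlow.
  assert (Hweighted : f a <= f b * exp (k * (b - a))).
  { assert (H := deriv_nonneg_le (fun s => f s * exp (k * (s - a)))
      (fun c => f' c * exp (k * (c - a)) + f c * (k * exp (k * (c - a)))) a b Hab).
    simpl in H. rewrite Rminus_eq_0, Rmult_0_r, exp_0, Rmult_1_r in H. apply H.
    - intros c Hc. exact (derivable_pt_lim_mult f _ c _ _ (Hd c Hc)
        (derivable_pt_lim_exp_affine k a c)).
    - intros c Hc. specialize (Hlow c Hc).
      assert (0 < exp (k * (c - a))) by apply exp_pos. nra. }
  assert (Hinv : exp (k * (b - a)) * exp (- k * (b - a)) = 1).
  { rewrite <- exp_plus. replace (k * (b - a) + - k * (b - a)) with 0 by ring. apply exp_0. }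
  assert (0 < exp (- k * (b - a))) by apply exp_pos.
  replace (f b) with (f b * exp (k * (b - a)) * exp (- k * (b - a)))
    by (rewrite Rmult_assoc, Hinv; ring).
  apply Rmult_le_compat_r; lra.
Qed.

Lemma gronwall_upper (f f' : R -> R) (k a b : R) : a <= b ->
  (forall c, a <= c <= b -> derivable_pt_lim f c (f' c)) ->
  (forall c, a < c < b -> f' c <= - k * f c) ->
  f b <= f a * exp (- k * (b - a)).
Proof.
  intros Hab Hd Hup.
  enough (- f a * exp (- k * (b - a)) <= - f b) by lra.
  apply (gronwall_lower (fun s => - f s) (fun c => - f' c) k a b Hab).
  - intros c Hc. exact (derivable_pt_lim_opp f c (f' c) (Hd c Hc)).
  - intros c Hc. specialize (Hup c Hc). lra.
Qed.

Lemma exp_decay_eventually_lt (A k a eps : R) : 0 <= A -> 0 < k -> 0 < eps ->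
  exists T, a <= T /\ forall t, T <= t -> A * exp (- k * (t - a)) < eps.
Proof.
  intros HA Hk He.
  set (q := eps / (A + 1)). assert (Hq : 0 < q) by (unfold q; apply Rdiv_lt_0_compat; lra).
  exists (Rmax a (a - ln q / k + 1)). split; [apply Rmax_l|].
  intros t Ht.
  assert (Ht2 : a - ln q / k + 1 <= t) by (eapply Rle_trans; [apply Rmax_r|exact Ht]).
  assert (Hlt : - k * (t - a) < ln q).
  { assert (E1 : k * (- ln q / k + 1) = - ln q + k) by (field; lra).
    assert (k * (- ln q / k + 1) <= k * (t - a)) by (apply Rmult_le_compat_l; lra). lra. }
  apply exp_increasing in Hlt. rewrite exp_ln in Hlt by auto.
  assert (q * (A + 1) = eps) by (unfold q; field; lra).
  assert (0 < exp (- k * (t - a))) by apply exp_pos. nra.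
Qed.

Lemma conv_infty_of_exp_bound (f : R -> R) (l A k a : R) : 0 <= A -> 0 < k ->
  (forall t, a <= t -> Rabs (f t - l) <= A * exp (- k * (t - a))) -> conv_infty f l.
Proof.
  intros HA Hk H eps He. destruct (exp_decay_eventually_lt A k a eps HA Hk He) as [T [HT1 HT2]].
  exists T. intros t Ht. eapply Rle_lt_trans; [apply H; lra|]. apply HT2; auto.
Qed.

Lemma conv_infty_of_nonincreasing (f : R -> R) (a m : R) :
  (forall s t, a <= s <= t -> f t <= f s) -> (forall t, a <= t -> m <= f t) ->
  exists l, conv_infty f l.
Proof.
  intros Hmono Hlow.
  set (E := fun v => exists t, a <= t /\ v = - f t).
  assert (HE : bound E) by (exists (- m); intros v [t [Ht ->]]; specialize (Hlow t Ht); lra).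
  assert (HE0 : exists v, E v) by (exists (- f a), a; split; [lra|auto]).
  destruct (completeness E HE HE0) as [L [Hub Hleast]].
  exists (- L). intros eps He.
  assert (exists t0, a <= t0 /\ L - eps < - f t0) as [t0 [Ht0 Hclose]].
  { apply NNPP. intros Hno. assert (L <= L - eps); [|lra].
    apply Hleast. intros v [t [Ht ->]].
    destruct (Rle_or_lt (- f t) (L - eps)); auto. exfalso; apply Hno; exists t; auto. }
  exists t0. intros t Ht.
  assert (f t <= f t0) by (apply Hmono; lra).
  assert (- f t <= L) by (apply Hub; exists t; split; [lra|auto]).
  rewrite Rabs_right; lra.
Qed.

(* [f + A / k * exp (- k (. - a))] is nonincreasing and bounded below. *)
Lemma conv_infty_of_deriv_le_exp (f f' : R -> R) (A k a m : R) : 0 <= A -> 0 < k ->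
  (forall c, a <= c -> derivable_pt_lim f c (f' c)) ->
  (forall c, a < c -> f' c <= A * exp (- k * (c - a))) ->
  (forall t, a <= t -> m <= f t) -> exists l, conv_infty f l.
Proof.
  intros HA Hk Hd Hup Hlow.
  set (tail := fun s => A / k * exp (- k * (s - a))).
  assert (Htail : forall s, 0 <= tail s).
  { intros s. unfold tail. apply Rmult_le_pos; [apply Rdiv_le_0_compat; lra|].
    apply Rlt_le, exp_pos. }
  destruct (conv_infty_of_nonincreasing (fun s => f s + tail s) a m) as [l Hl].
  - intros s t Hst.
    apply (deriv_nonpos_ge (fun u => f u + tail u)
      (fun c => f' c + A / k * (- k * exp (- k * (c - a)))) s t).
    + lra.
    + intros c Hc. exact (derivable_pt_lim_plus f _ c _ _ (Hd c ltac:(lra))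
        (derivable_pt_lim_scal _ (A / k) c _ (derivable_pt_lim_exp_affine (- k) a c))).
    + intros c Hc. specialize (Hup c ltac:(lra)).
      replace (A / k * (- k * exp (- k * (c - a)))) with (- (A * exp (- k * (c - a))))
        by (field; lra). lra.
  - intros t Ht. specialize (Hlow t Ht). specialize (Htail t). lra.
  - exists l. intros eps He. destruct (Hl (eps / 2) ltac:(lra)) as [T1 HT1].
    assert (HAk : 0 <= A / k) by (apply Rdiv_le_0_compat; lra).
    destruct (exp_decay_eventually_lt (A / k) k a (eps / 2) HAk Hk ltac:(lra))
      as [T2 [_ HT2]].
    exists (Rmax T1 T2). intros t Ht.
    specialize (HT1 t (Rle_trans _ _ _ (Rmax_l _ _) Ht)).
    specialize (HT2 t (Rle_trans _ _ _ (Rmax_r _ _) Ht)).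
    specialize (Htail t). unfold tail in *.
    apply Rabs_def2 in HT1. apply Rabs_def1; lra.
Qed.

Lemma conv_infty_limit_between (f : R -> R) (l lo hi a : R) : conv_infty f l ->
  (forall t, a <= t -> lo <= f t <= hi) -> lo <= l <= hi.
Proof.
  intros Hc Hf. split.
  - destruct (Rle_or_lt lo l) as [|Hl]; auto. exfalso.
    destruct (Hc (lo - l) ltac:(lra)) as [T HT]. specialize (HT (Rmax T a) (Rmax_l _ _)).
    specialize (Hf (Rmax T a) (Rmax_r _ _)). rewrite Rabs_right in HT; lra.
  - destruct (Rle_or_lt l hi) as [|Hl]; auto. exfalso.
    destruct (Hc (l - hi) ltac:(lra)) as [T HT]. specialize (HT (Rmax T a) (Rmax_l _ _)).
    specialize (Hf (Rmax T a) (Rmax_r _ _)). rewrite Rabs_left in HT; lra.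
Qed.

Lemma logistic_one_minus (f : R -> R) (h t : R) :
  derivable_pt_lim f t (f t * (1 - f t) * h) ->
  derivable_pt_lim (fun s => 1 - f s) t ((1 - f t) * (1 - (1 - f t)) * - h).
Proof.
  intros H. replace ((1 - f t) * (1 - (1 - f t)) * - h) with (0 - f t * (1 - f t) * h) by ring.
  exact (derivable_pt_lim_minus (fct_cte 1) f t 0 _ (derivable_pt_lim_const 1 t) H).
Qed.

Lemma logistic_pos_preserved (f h : R -> R) (M a b : R) : a <= b -> 0 <= M ->
  (forall c, a <= c <= b -> derivable_pt_lim f c (f c * (1 - f c) * h c)) ->
  (forall c, a < c < b -> 0 < f c < 1 /\ - M <= h c) ->
  0 < f a -> 0 < f b.
Proof.
  intros Hab HM Hd Hin Ha.
  assert (0 < exp (- M * (b - a))) by apply exp_pos.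
  enough (f a * exp (- M * (b - a)) <= f b) by nra.
  apply (gronwall_lower f (fun u => f u * (1 - f u) * h u) M a b Hab Hd).
  intros c Hc. destruct (Hin c Hc) as [[? ?] ?].
  assert (0 <= (1 - f c) * h c + M) by (destruct (Rle_or_lt 0 (h c)); nra).
  nra.
Qed.

Lemma logistic_in01_preserved (f h : R -> R) (M a b : R) : a <= b -> 0 <= M ->
  (forall c, a <= c <= b -> derivable_pt_lim f c (f c * (1 - f c) * h c)) ->
  (forall c, a < c < b -> 0 < f c < 1 /\ - M <= h c <= M) ->
  0 < f a < 1 -> 0 < f b < 1.
Proof.
  intros Hab HM Hd Hin Ha. split.
  - apply (logistic_pos_preserved f h M a b Hab HM Hd); [|lra].
    intros c Hc. destruct (Hin c Hc) as [? [? ?]]. auto.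
  - enough (0 < 1 - f b) by lra.
    apply (logistic_pos_preserved (fun s => 1 - f s) (fun c => - h c) M a b Hab HM); [| |lra].
    + intros c Hc. apply logistic_one_minus, Hd, Hc.
    + intros c Hc. destruct (Hin c Hc) as [? ?]. split; lra.
Qed.

(* While [h <= - d], f is nonincreasing, hence [1 - f >= 1 - f a] and [f' <= - d (1 - f a) f]. *)
Lemma logistic_exp_decay (f h : R -> R) (d a b : R) : a <= b -> 0 <= d ->
  (forall c, a <= c <= b -> derivable_pt_lim f c (f c * (1 - f c) * h c)) ->
  (forall c, a <= c <= b -> 0 < f c < 1) ->
  (forall c, a < c < b -> h c <= - d) ->
  f b <= f a * exp (- (d * (1 - f a)) * (b - a)).
Proof.
  intros Hab Hd Hder Hin Hh.
  assert (Hmono : forall c, a <= c <= b -> f c <= f a).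
  { intros c Hc. apply (deriv_nonpos_ge f (fun u => f u * (1 - f u) * h u) a c); [lra| |].
    - intros u Hu. apply Hder; lra.
    - intros u Hu. destruct (Hin u ltac:(lra)). specialize (Hh u ltac:(lra)).
      assert (0 < f u * (1 - f u)) by nra. nra. }
  apply (gronwall_upper f (fun u => f u * (1 - f u) * h u) _ a b Hab Hder).
  intros c Hc. destruct (Hin c ltac:(lra)). specialize (Hh c Hc).
  specialize (Hmono c ltac:(lra)).
  assert (0 < f c * (1 - f c)) by nra.
  assert (f c * (1 - f c) * h c <= - d * (f c * (1 - f c))) by nra.
  assert (0 <= d * f c * (f a - f c)) by (apply Rmult_le_pos; nra).
  nra.
Qed.

Lemma logistic_conv_zero (f h : R -> R) (d a : R) : 0 < d ->
  (forall c, a <= c -> derivable_pt_lim f c (f c * (1 - f c) * h c)) ->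
  (forall c, a <= c -> 0 < f c < 1) ->
  (forall c, a < c -> h c <= - d) -> conv_infty f 0.
Proof.
  intros Hd Hder Hin Hh. destruct (Hin a (Rle_refl a)).
  apply (conv_infty_of_exp_bound f 0 (f a) (d * (1 - f a)) a); [lra|nra|].
  intros t Ht. destruct (Hin t Ht). rewrite Rminus_0_r, Rabs_right by lra.
  apply (logistic_exp_decay f h); [lra|lra| | |].
  - intros c Hc. apply Hder; lra.
  - intros c Hc. apply Hin; lra.
  - intros c Hc. apply Hh; lra.
Qed.

Definition right_cont_at (f : R -> R) (t : R) : Prop :=
  forall eps, 0 < eps -> exists delta, 0 < delta /\
    forall u, t <= u < t + delta -> Rabs (f u - f t) < eps.

Lemma right_cont0_at (f : R -> R) : right_cont0 f -> right_cont_at f 0.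
Proof.
  intros Hc eps He. destruct (Hc eps He) as [d [Hd Hu]].
  exists d. split; auto. intros u Hu'. apply Hu. lra.
Qed.

Lemma derivable_right_cont_at (f : R -> R) (t l : R) :
  derivable_pt_lim f t l -> right_cont_at f t.
Proof.
  intros H eps He.
  assert (Hc : continuity_pt f t) by (apply derivable_continuous_pt; exists l; exact H).
  destruct (Hc eps He) as [d [Hd Hclose]]. exists d. split; auto.
  intros u Hu. destruct (Req_dec u t) as [->|Hne].
  - rewrite Rminus_eq_0, Rabs_R0; auto.
  - apply (Hclose u). split; [split; [exact I|auto]|].
    simpl. unfold R_dist. rewrite Rabs_right; lra.
Qed.

Lemma in01_right_stable (f : R -> R) (t : R) : right_cont_at f t -> 0 < f t < 1 ->
  exists e, 0 < e /\ forall u, t <= u < t + e -> 0 < f u < 1.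
Proof.
  intros Hc Hf.
  destruct (Hc (Rmin (f t) (1 - f t)) ltac:(apply Rmin_pos; lra)) as [d [Hd Hclose]].
  exists d. split; auto. intros u Hu. specialize (Hclose u Hu).
  assert (Rmin (f t) (1 - f t) <= f t) by apply Rmin_l.
  assert (Rmin (f t) (1 - f t) <= 1 - f t) by apply Rmin_r.
  apply Rabs_def2 in Hclose. lra.
Qed.

(* Real induction on [0, +oo): the supremum of the initial segments on which P holds is +oo. *)
Lemma right_continuation (P : R -> Prop) : P 0 ->
  (forall t, 0 <= t -> P t -> exists e, 0 < e /\ forall u, t <= u < t + e -> P u) ->
  (forall t, 0 < t -> (forall u, 0 <= u < t -> P u) -> P t) ->
  forall t, 0 <= t -> P t.
Proof.
  intros H0 Hopen Hclosed t1 Ht1.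
  set (A := fun s => 0 <= s <= t1 /\ forall u, 0 <= u <= s -> P u).
  assert (HA : bound A) by (exists t1; intros s [Hs _]; lra).
  assert (HA0 : A 0) by (split; [lra|intros u Hu; replace u with 0 by lra; exact H0]).
  destruct (completeness A HA (ex_intro _ 0 HA0)) as [tau [Hub Hleast]].
  assert (Htau : 0 <= tau <= t1).
  { split; [apply Hub, HA0|apply Hleast; intros s [Hs _]; lra]. }
  assert (Hbelow : forall u, 0 <= u < tau -> P u).
  { intros u Hu. apply NNPP. intros HPu. assert (tau <= u); [|lra].
    apply Hleast. intros s [_ Hs]. destruct (Rle_or_lt s u); auto.
    exfalso. apply HPu, Hs. lra. }
  assert (Hupto : forall u, 0 <= u <= tau -> P u).
  { intros u Hu. destruct (Rle_lt_or_eq_dec u tau ltac:(lra)) as [Hlt| ->]; [apply Hbelow; lra|].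
    destruct (Rle_lt_or_eq_dec 0 tau ltac:(lra)) as [Hpos|<-]; [|exact H0].
    apply Hclosed; auto. }
  destruct (Rle_lt_or_eq_dec tau t1 ltac:(lra)) as [Hlt|<-]; [|apply Hupto; lra].
  exfalso. destruct (Hopen tau ltac:(lra) (Hupto tau ltac:(lra))) as [e [He Hnext]].
  set (s := Rmin t1 (tau + e / 2)).
  assert (s <= t1) by apply Rmin_l.
  assert (s <= tau + e / 2) by apply Rmin_r.
  assert (tau < s) by (apply Rmin_glb_lt; lra).
  assert (s <= tau); [|lra].
  apply Hub. split; [lra|]. intros u Hu.
  destruct (Rle_or_lt u tau); [apply Hupto; lra|apply Hnext; lra].
Qed.

(* [gain_x] and [gain_y] are the payoff advantages of strategy 1 in populations 1 and 2. *)
Definition gain_x (y r : R) : R := r * y / 2 - y / 2 + 1 / 2.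
Definition gain_y (x r : R) : R := r * x / 2 - x / 2 - r / 2.
Definition feedback (th1 th2 x y : R) : R := (1 + th1) * x + (1 + th2) * y - 2.

Definition in_unit_cube (a b c : R) : Prop := 0 < a < 1 /\ 0 < b < 1 /\ 0 < c < 1.

Lemma gains_bounded (th1 th2 a b c : R) : 0 < th1 -> 0 < th2 -> in_unit_cube a b c ->
  (- (2 + th1 + th2) <= gain_x b c <= 2 + th1 + th2) /\
  (- (2 + th1 + th2) <= gain_y a c <= 2 + th1 + th2) /\
  (- (2 + th1 + th2) <= feedback th1 th2 a b <= 2 + th1 + th2).
Proof.
  intros Hth1 Hth2 [? [? ?]]. unfold gain_x, gain_y, feedback.
  assert (0 < c * b < 1) by nra. assert (0 < c * a < 1) by nra.
  assert (0 < th1 * a < th1) by nra. assert (0 < th2 * b < th2) by nra.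
  repeat split; lra.
Qed.

Section Replicator.

Variables (th1 th2 : R) (x y r : R -> R).
Hypotheses (Hth1 : 0 < th1) (Hth2 : 0 < th2).
Hypothesis Hderiv : forall t : R, 0 < t ->
  derivable_pt_lim x t (fx (x t) (y t) (r t)) /\
  derivable_pt_lim y t (fy (x t) (y t) (r t)) /\
  derivable_pt_lim r t (fr th1 th2 (x t) (y t) (r t)).

Lemma x_deriv t : 0 < t -> derivable_pt_lim x t (x t * (1 - x t) * gain_x (y t) (r t)).
Proof. intros Ht. apply (Hderiv t Ht). Qed.

Lemma y_deriv t : 0 < t -> derivable_pt_lim y t (y t * (1 - y t) * gain_y (x t) (r t)).
Proof. intros Ht. apply (Hderiv t Ht). Qed.

Lemma r_deriv t : 0 < t ->
  derivable_pt_lim r t (r t * (1 - r t) * feedback th1 th2 (x t) (y t)).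
Proof. intros Ht. apply (Hderiv t Ht). Qed.

Lemma in_unit_cube_closed t : 0 < t ->
  (forall u, 0 <= u < t -> in_unit_cube (x u) (y u) (r u)) -> in_unit_cube (x t) (y t) (r t).
Proof.
  intros Ht Hbefore.
  assert (Hbound : forall c, t / 2 < c < t ->
    in_unit_cube (x c) (y c) (r c) /\
    (- (2 + th1 + th2) <= gain_x (y c) (r c) <= 2 + th1 + th2) /\
    (- (2 + th1 + th2) <= gain_y (x c) (r c) <= 2 + th1 + th2) /\
    (- (2 + th1 + th2) <= feedback th1 th2 (x c) (y c) <= 2 + th1 + th2)).
  { intros c Hc. assert (Hin := Hbefore c ltac:(lra)). split; auto.
    apply gains_bounded; auto. }
  destruct (Hbefore (t / 2) ltac:(lra)) as [Hx0 [Hy0 Hr0]].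
  split; [|split].
  - apply (logistic_in01_preserved x (fun c => gain_x (y c) (r c)) (2 + th1 + th2) (t / 2) t);
      [lra|lra| | |exact Hx0].
    + intros c Hc. apply x_deriv. lra.
    + intros c Hc. destruct (Hbound c Hc) as [[? _] [? _]]. auto.
  - apply (logistic_in01_preserved y (fun c => gain_y (x c) (r c)) (2 + th1 + th2) (t / 2) t);
      [lra|lra| | |exact Hy0].
    + intros c Hc. apply y_deriv. lra.
    + intros c Hc. destruct (Hbound c Hc) as [[_ [? _]] [_ [? _]]]. auto.
  - apply (logistic_in01_preserved r (fun c => feedback th1 th2 (x c) (y c)) (2 + th1 + th2)
      (t / 2) t); [lra|lra| | |exact Hr0].
    + intros c Hc. apply r_deriv. lra.
    + intros c Hc. destruct (Hbound c Hc) as [[_ [_ ?]] [_ [_ ?]]]. auto.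
Qed.

Lemma solution_in_unit_cube : in_unit_cube (x 0) (y 0) (r 0) ->
  right_cont0 x -> right_cont0 y -> right_cont0 r ->
  forall t, 0 <= t -> in_unit_cube (x t) (y t) (r t).
Proof.
  intros H0 Cx Cy Cr. apply right_continuation; [exact H0| |exact in_unit_cube_closed].
  intros t Ht [Hx [Hy Hr]].
  assert (Hcont : right_cont_at x t /\ right_cont_at y t /\ right_cont_at r t).
  { destruct (Rle_lt_or_eq_dec 0 t Ht) as [Hpos|<-].
    - destruct (Hderiv t Hpos) as [Dx [Dy Dr]].
      repeat split; eapply derivable_right_cont_at; eassumption.
    - repeat split; apply right_cont0_at; assumption. }
  destruct Hcont as [Cxt [Cyt Crt]].
  destruct (in01_right_stable x t Cxt Hx) as [e1 [He1 Hx']].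
  destruct (in01_right_stable y t Cyt Hy) as [e2 [He2 Hy']].
  destruct (in01_right_stable r t Crt Hr) as [e3 [He3 Hr']].
  exists (Rmin e1 (Rmin e2 e3)). split; [repeat apply Rmin_pos; auto|].
  intros u Hu.
  assert (Rmin e1 (Rmin e2 e3) <= e1) by apply Rmin_l.
  assert (Rmin e1 (Rmin e2 e3) <= Rmin e2 e3) by apply Rmin_r.
  assert (Rmin e2 e3 <= e2) by apply Rmin_l.
  assert (Rmin e2 e3 <= e3) by apply Rmin_r.
  split; [apply Hx'|split; [apply Hy'|apply Hr']]; lra.
Qed.

Hypothesis Hcube : forall t, 0 <= t -> in_unit_cube (x t) (y t) (r t).

Lemma x_nondecreasing s t : 0 < s <= t -> x s <= x t.
Proof.
  intros Hst. apply (deriv_nonneg_le x (fun c => x c * (1 - x c) * gain_x (y c) (r c)) s t);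
    [lra|intros c Hc; apply x_deriv; lra|].
  intros c Hc. destruct (Hcube c ltac:(lra)) as [[? ?] [[? ?] [? ?]]]. unfold gain_x.
  assert (r c * y c < y c) by nra. apply Rmult_le_pos; nra.
Qed.

Lemma y_nonincreasing s t : 0 < s <= t -> y t <= y s.
Proof.
  intros Hst. apply (deriv_nonpos_ge y (fun c => y c * (1 - y c) * gain_y (x c) (r c)) s t);
    [lra|intros c Hc; apply y_deriv; lra|].
  intros c Hc. destruct (Hcube c ltac:(lra)) as [[? ?] [[? ?] [? ?]]]. unfold gain_y.
  assert (0 < y c * (1 - y c)) by nra. assert (r c * x c < x c) by nra.
  assert (r c * x c / 2 - x c / 2 - r c / 2 < 0) by nra. nra.
Qed.

Definition rate : R := x 1 * (1 - y 1) / 2.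

Lemma rate_pos : 0 < rate.
Proof. destruct (Hcube 1 ltac:(lra)) as [[? ?] [[? ?] _]]. unfold rate. nra. Qed.

Lemma one_minus_x_exp_bound t : 1 <= t -> 1 - x t <= exp (- rate * (t - 1)).
Proof.
  intros Ht. destruct (Hcube 1 ltac:(lra)) as [[? ?] [[? ?] _]].
  replace (- rate * (t - 1)) with (- ((1 - y 1) / 2 * (1 - (1 - x 1))) * (t - 1))
    by (unfold rate; field).
  assert (0 < exp (- ((1 - y 1) / 2 * (1 - (1 - x 1))) * (t - 1))) by apply exp_pos.
  enough (1 - x t <= (1 - x 1) * exp (- ((1 - y 1) / 2 * (1 - (1 - x 1))) * (t - 1))) by nra.
  apply (logistic_exp_decay (fun s => 1 - x s) (fun c => - gain_x (y c) (r c))); [lra|lra| | |].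
  - intros c Hc. apply logistic_one_minus, x_deriv. lra.
  - intros c Hc. destruct (Hcube c ltac:(lra)) as [[? ?] _]. lra.
  - intros c Hc. assert (y c <= y 1) by (apply y_nonincreasing; lra).
    destruct (Hcube c ltac:(lra)) as [_ [[? ?] [? ?]]]. unfold gain_x. nra.
Qed.

Lemma y_exp_bound t : 1 <= t -> y t <= exp (- rate * (t - 1)).
Proof.
  intros Ht. destruct (Hcube 1 ltac:(lra)) as [[? ?] [[? ?] _]].
  replace (- rate * (t - 1)) with (- (x 1 / 2 * (1 - y 1)) * (t - 1)) by (unfold rate; field).
  assert (0 < exp (- (x 1 / 2 * (1 - y 1)) * (t - 1))) by apply exp_pos.
  enough (y t <= y 1 * exp (- (x 1 / 2 * (1 - y 1)) * (t - 1))) by nra.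
  apply (logistic_exp_decay y (fun c => gain_y (x c) (r c))); [lra|lra| | |].
  - intros c Hc. apply y_deriv. lra.
  - intros c Hc. destruct (Hcube c ltac:(lra)) as [_ [? _]]. lra.
  - intros c Hc. assert (x 1 <= x c) by (apply x_nondecreasing; lra).
    destruct (Hcube c ltac:(lra)) as [[? ?] [_ [? ?]]]. unfold gain_y. nra.
Qed.

Lemma x_conv : conv_infty x 1.
Proof.
  apply (conv_infty_of_exp_bound x 1 1 rate 1); [lra|apply rate_pos|].
  intros t Ht. destruct (Hcube t ltac:(lra)) as [[? ?] _].
  rewrite Rabs_left1 by lra. assert (Hb := one_minus_x_exp_bound t Ht). lra.
Qed.

Lemma y_conv : conv_infty y 0.
Proof.
  apply (conv_infty_of_exp_bound y 0 1 rate 1); [lra|apply rate_pos|].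
  intros t Ht. destruct (Hcube t ltac:(lra)) as [_ [[? ?] _]].
  rewrite Rminus_0_r, Rabs_right by lra. assert (Hb := y_exp_bound t Ht). lra.
Qed.

Lemma feedback_exp_bound t : 1 <= t ->
  th1 - 1 - (2 + th1 + th2) * exp (- rate * (t - 1)) <= feedback th1 th2 (x t) (y t) <=
  th1 - 1 + (2 + th1 + th2) * exp (- rate * (t - 1)).
Proof.
  intros Ht. destruct (Hcube t ltac:(lra)) as [[? ?] [[? ?] _]].
  assert (Hx := one_minus_x_exp_bound t Ht). assert (Hy := y_exp_bound t Ht).
  unfold feedback. nra.
Qed.

Lemma feedback_eventually eps : 0 < eps -> exists T, 1 <= T /\ forall t, T <= t ->
  th1 - 1 - eps < feedback th1 th2 (x t) (y t) < th1 - 1 + eps.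
Proof.
  intros He.
  destruct (exp_decay_eventually_lt (2 + th1 + th2) rate 1 eps ltac:(lra) rate_pos He)
    as [T [HT Hsmall]].
  exists T. split; auto. intros t Ht.
  specialize (Hsmall t Ht). assert (Hb := feedback_exp_bound t ltac:(lra)). lra.
Qed.

Lemma r_conv_zero : th1 < 1 -> conv_infty r 0.
Proof.
  intros Hlt. destruct (feedback_eventually ((1 - th1) / 2) ltac:(lra)) as [T [HT Hnear]].
  apply (logistic_conv_zero r (fun c => feedback th1 th2 (x c) (y c)) ((1 - th1) / 2) T).
  - lra.
  - intros c Hc. apply r_deriv. lra.
  - intros c Hc. apply Hcube. lra.
  - intros c Hc. specialize (Hnear c ltac:(lra)). lra.
Qed.

Lemma r_conv_one : 1 < th1 -> conv_infty r 1.
Proof.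
  intros Hgt. destruct (feedback_eventually ((th1 - 1) / 2) ltac:(lra)) as [T [HT Hnear]].
  assert (H : conv_infty (fun s => 1 - r s) 0).
  { apply (logistic_conv_zero _ (fun c => - feedback th1 th2 (x c) (y c)) ((th1 - 1) / 2) T).
    - lra.
    - intros c Hc. apply logistic_one_minus, r_deriv. lra.
    - intros c Hc. destruct (Hcube c ltac:(lra)) as [_ [_ ?]]. lra.
    - intros c Hc. specialize (Hnear c ltac:(lra)). lra. }
  intros eps He. destruct (H eps He) as [T' HT']. exists T'. intros t Ht.
  rewrite Rabs_minus_sym. replace (1 - r t) with (1 - r t - 0) by ring. exact (HT' t Ht).
Qed.

Lemma r_converges : th1 = 1 -> exists rs, 0 <= rs <= 1 /\ conv_infty r rs.
Proof.
  intros Heq.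
  destruct (conv_infty_of_deriv_le_exp r
      (fun c => r c * (1 - r c) * feedback th1 th2 (x c) (y c)) (2 + th1 + th2) rate 1 0
      ltac:(lra) rate_pos) as [l Hl].
  - intros c Hc. apply r_deriv. lra.
  - intros c Hc. destruct (Hcube c ltac:(lra)) as [_ [_ [? ?]]].
    assert (Hb := feedback_exp_bound c ltac:(lra)).
    assert (0 < r c * (1 - r c) < 1) by nra.
    destruct (Rle_or_lt 0 (feedback th1 th2 (x c) (y c))); nra.
  - intros t Ht. destruct (Hcube t ltac:(lra)) as [_ [_ ?]]. lra.
  - exists l. split; [|exact Hl].
    apply (conv_infty_limit_between r l 0 1 0 Hl).
    intros t Ht. destruct (Hcube t Ht) as [_ [_ ?]]. lra.
Qed.

End Replicator.

Theorem mainTheorem4 :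
  forall (th1 th2 : R), 0 < th1 -> 0 < th2 ->
  forall (x0 y0 r0 : R), 0 < x0 < 1 -> 0 < y0 < 1 -> 0 < r0 < 1 ->
  forall (x y r : R -> R), is_solution th1 th2 x y r x0 y0 r0 ->
    conv_infty x 1 /\ conv_infty y 0 /\
    (1 < th1 -> conv_infty r 1) /\
    (th1 < 1 -> conv_infty r 0) /\
    (th1 = 1 -> exists rs : R, 0 <= rs <= 1 /\ conv_infty r rs).
Proof.
  intros th1 th2 Hth1 Hth2 x0 y0 r0 Hx0 Hy0 Hr0 x y r
    [Ex [Ey [Er [Cx [Cy [Cr Hderiv]]]]]].
  assert (Hcube : forall t, 0 <= t -> in_unit_cube (x t) (y t) (r t)).
  { apply (solution_in_unit_cube th1 th2 x y r Hth1 Hth2 Hderiv); auto.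
    rewrite Ex, Ey, Er. repeat split; lra. }
  split; [|split; [|split; [|split]]].
  - apply (x_conv th1 th2 x y r); assumption.
  - apply (y_conv th1 th2 x y r); assumption.
  - intros Hgt. apply (r_conv_one th1 th2 x y r); assumption.
  - intros Hlt. apply (r_conv_zero th1 th2 x y r); assumption.
  - intros Heq. apply (r_converges th1 th2 x y r); assumption.
Qed.
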